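(* Let $u\in\{0,1,2\}^*$, $w\in\{0,1\}^*$ and $s\in\mathcal{S}$ be such that $|u|=|w|$ and $\mathrm{val}_{\mathcal{F}}(u)=\mathrm{val}_{\mathcal{F}}(ws)$. Then for every $a\in\{0,1,2\}$ there exist a unique $b\in\{0,1\}$ and a unique $t\in\mathcal{S}$ such that $\mathrm{val}_{\mathcal{F}}(ua)=\mathrm{val}_{\mathcal{F}}(wbt)$.
   Context: Fibonacci numbers: $F_0=1$, $F_1=2$, $F_n=F_{n-1}+F_{n-2}$ for $n\ge2$. For a word $w=w_{k-1}\cdots w_0$ over $\{0,1,2\}$ (digits indexed from the right), $\mathrm{val}_{\mathcal{F}}(w)=\sum_{i=0}^{k-1}w_iF_i$. $\mathcal{S}=\{000,001,010,100,101\}$, the set of binary words of length 3 with no two consecutive $1$'s. *)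

From mathcomp Require Import all_boot.
Set Implicit Arguments. Unset Strict Implicit. Unset Printing Implicit Defensive.

Fixpoint Fib (n : nat) : nat :=
  match n with
  | 0 => 1
  | 1 => 2
  | (m.+1 as p).+1 => Fib p + Fib m
  end.

(* A word w = w_{k-1} ... w_0 is a seq nat listed in reading order
   (most significant digit first); digit at position i (from the right)
   has weight Fib i. *)
Fixpoint valF (w : seq nat) : nat :=
  match w with
  | [::] => 0
  | x :: s => x * Fib (size s) + valF s
  end.

Definition ternary_word (w : seq nat) : bool := all (fun d => d <= 2) w.
Definition binary_word (w : seq nat) : bool := all (fun d => d <= 1) w.

Definition Sset : seq (seq nat) :=
  [:: [:: 0; 0; 0]; [:: 0; 0; 1]; [:: 0; 1; 0]; [:: 1; 0; 0]; [:: 1; 0; 1]].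

From mathcomp Require Import all_boot all_algebra zify.

Set Implicit Arguments.
Unset Strict Implicit.
Unset Printing Implicit Defensive.

(* Put [A = val u - val (w 000)] and [C = val (u 0) - val (w 0000)].  Appending a
   digit [x] to [u] and [y] to [w] maps [(A, C)] to [(C + x - 5y, A + C + 2x - 8y)],
   so [(A, C)] is the state of an automaton reading [u] and [w] in parallel from
   [(0, 0)].  Every reachable state lies in an explicit finite list or in one of two
   invariant regions ([A] and [C] both large, or both very negative), and on these
   [0 <= A <= 4] forces [0 <= C <= 7].  The hypothesis says [A = val s] is in
   [[0, 4]], so [val (u a) - val (w 0000) = C + a] is in [[0, 9]], and these ten
   values are taken exactly once by [val (b t)] with [b] a bit and [t \in S]. *)

Definition valF_shift (u : seq nat) (k : nat) : nat := valF (u ++ nseq k 0).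

Lemma valF_nseq0 (k : nat) : valF (nseq k 0) = 0.
Proof. by elim: k => //= k ->. Qed.

Lemma FibSS (n : nat) : Fib n.+2 = Fib n.+1 + Fib n.
Proof. by []. Qed.

Lemma valF_cons (x : nat) (s : seq nat) : valF (x :: s) = x * Fib (size s) + valF s.
Proof. by []. Qed.

Lemma valF_cat (u v : seq nat) : valF (u ++ v) = valF_shift u (size v) + valF v.
Proof.
rewrite /valF_shift; elim: u => [|x u IHu] /=; first by rewrite valF_nseq0.
by rewrite IHu !size_cat size_nseq addnA.
Qed.

Lemma valF_shift0 (u : seq nat) : valF_shift u 0 = valF u.
Proof. by rewrite /valF_shift cats0. Qed.

Lemma valF_shiftSS (u : seq nat) (k : nat) :
  valF_shift u k.+2 = valF_shift u k.+1 + valF_shift u k.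
Proof.
rewrite /valF_shift; elim: u => [|x u IHu]; first by rewrite /= !valF_nseq0.
by rewrite !cat_cons !valF_cons IHu !size_cat !size_nseq !addnS FibSS; lia.
Qed.

Lemma valF_shift_rcons (u : seq nat) (x k : nat) :
  valF_shift (rcons u x) k = valF_shift u k.+1 + x * Fib k.
Proof.
by rewrite /valF_shift cat_rcons valF_cat /= size_nseq valF_nseq0 addn0.
Qed.

Local Open Scope ring_scope.

Definition carry (u w : seq nat) : int * int :=
  ((valF u)%:Z - (valF_shift w 3)%:Z,
   (valF_shift u 1)%:Z - (valF_shift w 4)%:Z).

Definition carry_step (p : int * int) (x y : nat) : int * int :=
  (p.2 + x%:Z - 5 * y%:Z, p.1 + p.2 + 2 * x%:Z - 8 * y%:Z).

Lemma carry_rcons (u w : seq nat) (x y : nat) :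
  carry (rcons u x) (rcons w y) = carry_step (carry u w) x y.
Proof.
rewrite /carry /carry_step /=; rewrite -[valF (rcons u x)]valF_shift0.
rewrite !valF_shift_rcons /= (valF_shiftSS u 0) (valF_shiftSS w 3) valF_shift0.
by congr pair; lia.
Qed.

(* The states of the automaton reachable from [(0, 0)] before escaping. *)
Definition carry_states : seq (int * int) :=
  [:: (-3, -5); (-3, -4); (-2, -4); (-2, -3); (-2, -2); (-1, -2); (-1, -1);
      (0, 0); (0, 1); (1, 1); (1, 2); (2, 3); (2, 4); (3, 5); (3, 6); (4, 6);
      (4, 7); (5, 8); (5, 9); (6, 9); (6, 10); (6, 11); (7, 11); (7, 12)].

Definition escaped (p : int * int) : bool :=
  (8 <= p.1) && (13 <= p.2) || (p.1 <= -4) && (p.2 <= -6).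

Definition admissible (p : int * int) : bool := (p \in carry_states) || escaped p.

Lemma escaped_step (p : int * int) (x y : nat) :
  (x <= 2)%N -> (y <= 1)%N -> escaped p -> escaped (carry_step p x y).
Proof.
case: p => a c x2 y1; rewrite /escaped /= => /orP[] /andP[Ha Hc]; apply/orP.
  by left; apply/andP; split; lia.
by right; apply/andP; split; lia.
Qed.

Lemma carry_states_step :
  all (fun p => all (fun x => all (fun y => admissible (carry_step p x y))
                                  (iota 0 2)) (iota 0 3)) carry_states.
Proof. by []. Qed.

Lemma admissible_step (p : int * int) (x y : nat) :
  (x <= 2)%N -> (y <= 1)%N -> admissible p -> admissible (carry_step p x y).
Proof.
move=> x2 y1 /orP[Hp|Hp]; last by rewrite /admissible escaped_step ?orbT.
have /allP/(_ x) := allP carry_states_step p Hp.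
rewrite mem_iota add0n ltnS x2 => /(_ isT)/allP/(_ y).
by rewrite mem_iota add0n ltnS y1; apply.
Qed.

Lemma admissible_carry (u w : seq nat) :
  ternary_word u -> binary_word w -> size u = size w -> admissible (carry u w).
Proof.
elim/last_ind: u w => [|u x IHu] w; first by case: w.
case/lastP: w => [|w y]; first by rewrite size_rcons.
rewrite /ternary_word /binary_word !all_rcons !size_rcons carry_rcons.
move=> /andP[x2 tu] /andP[y1 bw] [eq_size].
exact: admissible_step (IHu w tu bw eq_size).
Qed.

Lemma admissible_bound (a c : int) :
  admissible (a, c) -> 0 <= a <= 4 -> 0 <= c <= 7.
Proof.
move=> /orP[Hp|]; last by rewrite /escaped /= => /orP[] /andP[? ?]; lia.
suff: all (fun p : int * int => (0 <= p.1 <= 4) ==> (0 <= p.2 <= 7)) carry_states.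
  by move=> /allP/(_ _ Hp)/implyP.
by [].
Qed.

Local Close Scope ring_scope.

Lemma carry_bound (u w : seq nat) :
  admissible (carry u w) -> valF_shift w 3 <= valF u <= valF_shift w 3 + 4 ->
  valF_shift w 4 <= valF_shift u 1 <= valF_shift w 4 + 7.
Proof. by rewrite /carry => /admissible_bound bound A04; have := bound _; lia. Qed.

Lemma size_Sset (t : seq nat) : t \in Sset -> size t = 3.
Proof. by move=> St; repeat case/predU1P: St => [->|St]. Qed.

Lemma valF_Sset_le (t : seq nat) : t \in Sset -> valF t <= 4.
Proof. by move=> St; repeat case/predU1P: St => [->|St]. Qed.

Lemma valF_cons_Sset_onto (D : nat) :
  D <= 9 -> exists b t, [/\ b <= 1, t \in Sset & valF (b :: t) = D].
Proof.
case: D => [|[|[|[|[|[|[|[|[|[|D]]]]]]]]]] // _;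
  [exists 0, [:: 0; 0; 0] | exists 0, [:: 0; 0; 1] | exists 0, [:: 0; 1; 0]
  | exists 0, [:: 1; 0; 0] | exists 0, [:: 1; 0; 1] | exists 1, [:: 0; 0; 0]
  | exists 1, [:: 0; 0; 1] | exists 1, [:: 0; 1; 0] | exists 1, [:: 1; 0; 0]
  | exists 1, [:: 1; 0; 1]] => //.
Qed.

Lemma valF_cons_Sset_inj (b b' : nat) (t t' : seq nat) :
  b <= 1 -> b' <= 1 -> t \in Sset -> t' \in Sset ->
  valF (b :: t) = valF (b' :: t') -> b = b' /\ t = t'.
Proof.
case: b => [|[|]] // _; case: b' => [|[|]] // _ St St';
by repeat case/predU1P: St => [->|St]; repeat case/predU1P: St' => [->|St'].
Qed.

Lemma valF_cat_cons_Sset (w : seq nat) (b : nat) (t : seq nat) : t \in Sset ->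
  valF (w ++ b :: t) = valF_shift w 4 + valF (b :: t).
Proof. by move=> /size_Sset st; rewrite valF_cat /= st. Qed.

Theorem lemma5p3 (u w s : seq nat) :
  ternary_word u -> binary_word w -> s \in Sset ->
  size u = size w -> valF u = valF (w ++ s) ->
  forall a : nat, a <= 2 ->
  exists b : nat, exists t : seq nat,
    [/\ b <= 1, t \in Sset & valF (rcons u a) = valF (w ++ b :: t)] /\
    (forall (b' : nat) (t' : seq nat),
        b' <= 1 -> t' \in Sset -> valF (rcons u a) = valF (w ++ b' :: t') ->
        b' = b /\ t' = t).
Proof.
move=> tu bw Ss eq_size eq_val a a2.
have C07 : valF_shift w 4 <= valF_shift u 1 <= valF_shift w 4 + 7.
  apply: carry_bound (admissible_carry tu bw eq_size) _.
  by rewrite eq_val valF_cat size_Sset //; have := valF_Sset_le Ss; lia.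
set D := valF_shift u 1 + a - valF_shift w 4.
have val_ua : valF (rcons u a) = valF_shift w 4 + D.
  by rewrite -valF_shift0 valF_shift_rcons muln1; lia.
have [b [t [b1 St val_bt]]] : exists b t, [/\ b <= 1, t \in Sset & valF (b :: t) = D].
  by apply: valF_cons_Sset_onto; lia.
exists b, t; split; first by rewrite valF_cat_cons_Sset // val_bt.
move=> b' t' b'1 St'; rewrite valF_cat_cons_Sset // val_ua -val_bt => /addnI eq_bt.
exact: valF_cons_Sset_inj b'1 b1 St' St (esym eq_bt).
Qed.
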